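(* Let $X$ be a metric space. Then no asymptotic cone of $X$ contains an isometric copy of the Riemannian circle of unit length if and only if $X$ does not approximate $n$-gons.
   Context: $S_n^0$ is the vertex set of the cycle graph $S_n$ of length $n$ (a Riemannian circle of length $n$ with $n$ equally spaced vertices) with the induced metric, and $\lambda S_n^0$ is it with the metric scaled by $\lambda>0$. $X$ approximates $n$-gons if for every $K>1$ and every $n\in\mathbb N$ there exist $K$-bilipschitz embeddings $\lambda S_n^0\to X$ for arbitrarily large $\lambda>0$. Asymptotic cone: for a nonprincipal ultrafilter $\mathscr U$ on $\mathbb N$, basepoints $b^{(m)}\in X$ and scalars $s^{(m)}>0$ with $s^{(m)}\to\infty$, take sequences $(x_m)$ with $d(x_m,b^{(m)})/s^{(m)}$ bounded, pseudometric $\lim_{\mathscr U}d(x_m,x'_m)/s^{(m)}$, and pass to the metric quotient. *)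

From Stdlib Require Import Reals Lra Classical.
Open Scope R_scope.

Definition is_metric {X : Type} (d : X -> X -> R) : Prop :=
  (forall x y, 0 <= d x y) /\
  (forall x y, d x y = 0 <-> x = y) /\
  (forall x y, d x y = d y x) /\
  (forall x y z, d x z <= d x y + d y z).

Definition is_ultrafilter (U : (nat -> Prop) -> Prop) : Prop :=
  U (fun _ => True) /\
  ~ U (fun _ => False) /\
  (forall A B : nat -> Prop, U A -> (forall n, A n -> B n) -> U B) /\
  (forall A B : nat -> Prop, U A -> U B -> U (fun n => A n /\ B n)) /\
  (forall A : nat -> Prop, U A \/ U (fun n => ~ A n)).

Definition is_principal (U : (nat -> Prop) -> Prop) : Prop :=
  exists k : nat, forall A : nat -> Prop, U A <-> A k.

Definition nonprincipal_ultrafilter (U : (nat -> Prop) -> Prop) : Prop :=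
  is_ultrafilter U /\ ~ is_principal U.

Definition ultralim (U : (nat -> Prop) -> Prop) (u : nat -> R) (L : R) : Prop :=
  forall eps, 0 < eps -> U (fun m => Rabs (u m - L) < eps).

Definition scaling_seq (s : nat -> R) : Prop :=
  (forall m, 0 < s m) /\
  (forall M, exists N, forall m, (N <= m)%nat -> M < s m).

(** Sequences (x_m) with d(x_m, b_m)/s_m bounded: the points (before
    quotienting) of the asymptotic cone with basepoints b and scalars s. *)
Definition cone_seq {X : Type} (d : X -> X -> R) (b : nat -> X) (s : nat -> R)
  (x : nat -> X) : Prop :=
  exists C, forall m, d (x m) (b m) / s m <= C.

Definition cone_dist_is {X : Type} (d : X -> X -> R) (U : (nat -> Prop) -> Prop)
  (s : nat -> R) (x x' : nat -> X) (L : R) : Prop :=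
  ultralim U (fun m => d (x m) (x' m) / s m) L.

(** Riemannian circle of unit length, parametrized by [0,1), intrinsic metric. *)
Definition circle1_dist (t t' : R) : R :=
  Rmin (Rabs (t - t')) (1 - Rabs (t - t')).

(** The asymptotic cone (U, b, s) of (X,d) contains an isometric copy of the
    unit-length circle: there is a map from the circle to the cone (given by
    choosing representative sequences of the image points) preserving distances. *)
Definition cone_contains_unit_circle {X : Type} (d : X -> X -> R)
  (U : (nat -> Prop) -> Prop) (b : nat -> X) (s : nat -> R) : Prop :=
  exists f : R -> (nat -> X),
    (forall t, 0 <= t < 1 -> cone_seq d b s (f t)) /\
    (forall t t', 0 <= t < 1 -> 0 <= t' < 1 ->
       cone_dist_is d U s (f t) (f t') (circle1_dist t t')).

(** Vertex metric of the cycle S_n^0: vertices 0..n-1, distance along S_n. *)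
Definition cycle_dist (n i j : nat) : R :=
  Rmin (Rabs (INR i - INR j)) (INR n - Rabs (INR i - INR j)).

Definition bilip_ngon {X : Type} (d : X -> X -> R) (K lambda : R) (n : nat)
  (f : nat -> X) : Prop :=
  forall i j, (i < n)%nat -> (j < n)%nat ->
    (lambda * cycle_dist n i j) / K <= d (f i) (f j) /\
    d (f i) (f j) <= K * (lambda * cycle_dist n i j).

Definition approximates_ngons {X : Type} (d : X -> X -> R) : Prop :=
  forall K, 1 < K -> forall n : nat, forall Lambda : R,
    exists lambda, Lambda < lambda /\ 0 < lambda /\
      exists f : nat -> X, bilip_ngon d K lambda n f.

From Stdlib Require Import Reals Lra Lia ZArith Classical ClassicalEpsilon.
From mathcomp Require ssrbool ssrnat filter.
Open Scope R_scope.

(* The n equally spaced points of an isometric unit circle in a cone U-approximate it: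
   for U-almost every m their rescaled distances d/s_m are within (1 - 1/K)/n of the
   n-cycle metric divided by n, and since distinct vertices are at cycle distance >= 1 this
   relative error makes them a K-bilipschitz copy of (s_m/n) S_n^0; taking such an m with
   s_m large gives arbitrarily large scales.  Conversely, take (m+1)-gons with constant
   1 + 1/(m+1) at scales lam_m > m and send t in [0,1) to the vertex floor(t(m+1)): the
   rescaled distances d/(lam_m (m+1)) are within 2/(m+1) of the circle metric, and an
   ordinary limit is a limit along every nonprincipal ultrafilter. *)

Section Ultrafilter.

Variable U : (nat -> Prop) -> Prop.
Hypothesis HU : is_ultrafilter U.

Lemma ultrafilter_mono (A B : nat -> Prop) : U A -> (forall n, A n -> B n) -> U B.
Proof. destruct HU as (_ & _ & HS & _). apply HS. Qed.

Lemma ultrafilter_and (A B : nat -> Prop) : U A -> U B -> U (fun n => A n /\ B n).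
Proof. destruct HU as (_ & _ & _ & HI & _). apply HI. Qed.

Lemma ultrafilter_inhabited (A : nat -> Prop) : U A -> exists n, A n.
Proof.
  intros HA. apply NNPP. intros Hempty.
  destruct HU as (_ & H0 & _). apply H0.
  apply (ultrafilter_mono A); [exact HA |]. intros n An. apply Hempty. now exists n.
Qed.

Lemma ultrafilter_forall_lt (k : nat) (P : nat -> nat -> Prop) :
  (forall i, (i < k)%nat -> U (P i)) -> U (fun m => forall i, (i < k)%nat -> P i m).
Proof.
  induction k as [|k IH]; intros HP.
  - apply (ultrafilter_mono _ _ (proj1 HU)). intros m _ i Hi. lia.
  - assert (Hk : U (fun m => forall i, (i < k)%nat -> P i m)) by (apply IH; auto).
    apply (ultrafilter_mono _ _ (ultrafilter_and _ _ Hk (HP k (Nat.lt_succ_diag_r k)))).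
    intros m [Hlt Hkm] i Hi.
    destruct (Nat.eq_dec i k) as [-> | Hne]; [exact Hkm | apply Hlt; lia].
Qed.

End Ultrafilter.

Lemma nonprincipal_ultrafilter_tail (U : (nat -> Prop) -> Prop) :
  nonprincipal_ultrafilter U -> forall N, U (fun m => (N <= m)%nat).
Proof.
  intros [HU Hnp] N. pose proof HU as (HT & _ & _ & _ & HC).
  induction N as [|N IH].
  - apply (ultrafilter_mono U HU _ _ HT). intros; lia.
  - destruct (HC (fun m => m = N)) as [HN | HN].
    + exfalso. apply Hnp. exists N. intros A. split.
      * intros HA.
        destruct (ultrafilter_inhabited U HU _ (ultrafilter_and U HU _ _ HA HN))
          as [m [Am ->]].
        exact Am.
      * intros AN. apply (ultrafilter_mono U HU _ _ HN). now intros m ->.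
    + apply (ultrafilter_mono U HU _ _ (ultrafilter_and U HU _ _ IH HN)).
      intros m [H1 H2]. lia.
Qed.

Lemma ultralim_of_Un_cv (U : (nat -> Prop) -> Prop) (u : nat -> R) (L : R) :
  nonprincipal_ultrafilter U -> Un_cv u L -> ultralim U u L.
Proof.
  intros HU Hcv eps Heps. destruct (Hcv eps Heps) as [N HN].
  apply (ultrafilter_mono U (proj1 HU) _ _ (nonprincipal_ultrafilter_tail U HU N)).
  intros m Hm. exact (HN m Hm).
Qed.

Lemma ultrafilter_exists_large (U : (nat -> Prop) -> Prop) (s : nat -> R)
  (P : nat -> Prop) (M : R) :
  nonprincipal_ultrafilter U -> scaling_seq s -> U P -> exists m, P m /\ M < s m.
Proof.
  intros HU [_ Hs] HP. destruct (Hs M) as [N HN].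
  destruct (ultrafilter_inhabited U (proj1 HU) _
              (ultrafilter_and U (proj1 HU) _ _ HP (nonprincipal_ultrafilter_tail U HU N)))
    as [m [Pm Hm]].
  exists m. auto.
Qed.

Lemma exists_nonprincipal_ultrafilter : exists U, nonprincipal_ultrafilter U.
Proof.
  destruct (filter.ultraFilterLemma filter.eventually_filter) as [G [HG Hsub]].
  assert (Htail : forall N, G (fun n => (N <= n)%nat)).
  { intros N. apply Hsub. exists N; [reflexivity |].
    intros n Hn. exact (ssrbool.elimT ssrnat.leP Hn). }
  exists G. split.
  - repeat split.
    + apply filter.filterT.
    + apply (filter.filter_not_empty G).
    + intros A B GA AB. apply (filter.filterS AB GA).
    + intros A B GA GB. apply (filter.filterI GA GB).
    + intros A. apply (filter.in_ultra_setVsetC A HG).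
  - intros [k Hk]. apply (Hk (fun n => (S k <= n)%nat)) in Htail. lia.
Qed.

Lemma Rabs_le_inv (x e : R) : Rabs x <= e -> - e <= x <= e.
Proof.
  intros H. pose proof (Rle_abs x). pose proof (Rle_abs (- x)). rewrite Rabs_Ropp in *. lra.
Qed.

Lemma Un_cv_of_bound (u : nat -> R) (L C : R) :
  (forall m, Rabs (u m - L) <= C / INR (S m)) -> Un_cv u L.
Proof.
  intros Hb eps Heps. destruct (INR_archimed eps C Heps) as [N HN].
  exists N. intros m Hm. unfold R_dist.
  apply Rle_lt_trans with (1 := Hb m).
  assert (HmN : INR N <= INR (S m)) by (apply le_INR; lia).
  assert (Hpos : 0 < INR (S m)) by (apply lt_0_INR; lia).
  apply Rmult_lt_reg_r with (INR (S m)); [exact Hpos |].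
  unfold Rdiv. rewrite Rmult_assoc, Rinv_l by lra. nra.
Qed.

(* Distance on a circle of length [L] between points at displacement [u], for [|u| <= L];
   [cycle_dist] and [circle1_dist] both unfold to it. *)
Definition circle_gap (L u : R) : R := Rmin (Rabs u) (L - Rabs u).

Lemma circle_gap_scale (c L u : R) :
  0 <= c -> circle_gap (c * L) (c * u) = c * circle_gap L u.
Proof.
  intros Hc. unfold circle_gap. rewrite Rabs_mult, (Rabs_pos_eq c Hc).
  unfold Rmin. destruct (Rle_dec _ _), (Rle_dec _ _); nra.
Qed.

Lemma circle_gap_lipschitz (L u v : R) :
  Rabs (circle_gap L u - circle_gap L v) <= Rabs (u - v).
Proof.
  pose proof (Rabs_triang_inv2 u v) as Huv. apply Rabs_le.
  apply Rabs_le_inv in Huv.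
  unfold circle_gap, Rmin. destruct (Rle_dec _ _), (Rle_dec _ _); lra.
Qed.

Lemma circle_gap_le (L u : R) : circle_gap L u <= L.
Proof.
  pose proof (Rabs_pos u). pose proof (Rmin_r (Rabs u) (L - Rabs u)). unfold circle_gap. lra.
Qed.

Lemma circle_gap_bounds (L u a : R) :
  a <= Rabs u <= L - a -> a <= circle_gap L u.
Proof. intros Hu. unfold circle_gap. apply Rmin_glb; lra. Qed.

Lemma cycle_index_gap (n i j : nat) :
  (i < n)%nat -> (j < n)%nat ->
  Rabs (INR i - INR j) <= INR n - 1 /\ (i <> j -> 1 <= Rabs (INR i - INR j)).
Proof.
  intros Hi Hj.
  assert (Hi' : INR i + 1 <= INR n) by (rewrite <- S_INR; apply le_INR; lia).
  assert (Hj' : INR j + 1 <= INR n) by (rewrite <- S_INR; apply le_INR; lia).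
  pose proof (pos_INR i). pose proof (pos_INR j).
  split; [apply Rabs_le; lra |].
  intros Hij.
  assert (Hlt : (i + 1 <= j)%nat \/ (j + 1 <= i)%nat) by lia.
  destruct Hlt as [Hlt | Hlt]; apply le_INR in Hlt; rewrite plus_INR in Hlt; simpl in Hlt;
    unfold Rabs; destruct (Rcase_abs _); lra.
Qed.

Lemma cycle_dist_bounds (n i j : nat) :
  (i < n)%nat -> (j < n)%nat -> 0 <= cycle_dist n i j <= INR n.
Proof.
  intros Hi Hj. destruct (cycle_index_gap n i j Hi Hj) as [Hmax _].
  split; [apply circle_gap_bounds | apply circle_gap_le].
  pose proof (Rabs_pos (INR i - INR j)). lra.
Qed.

Lemma cycle_dist_scaled_circle (n i j : nat) :
  (0 < n)%nat -> cycle_dist n i j = INR n * circle1_dist (INR i / INR n) (INR j / INR n).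
Proof.
  intros Hn. apply lt_0_INR in Hn.
  change (cycle_dist n i j) with (circle_gap (INR n) (INR i - INR j)).
  change (circle1_dist (INR i / INR n) (INR j / INR n))
    with (circle_gap 1 (INR i / INR n - INR j / INR n)).
  rewrite <- circle_gap_scale by lra. f_equal; field; lra.
Qed.

Definition nat_floor (x : R) : nat := Z.to_nat (Int_part x).

Lemma nat_floor_spec (x : R) : 0 <= x -> INR (nat_floor x) <= x < INR (nat_floor x) + 1.
Proof.
  intros Hx. destruct (base_Int_part x) as [H1 H2].
  assert (Hz : (0 <= Int_part x)%Z).
  { assert (Hgt : (-1 < Int_part x)%Z) by (apply lt_IZR; lra). lia. }
  unfold nat_floor. rewrite INR_IZR_INZ, Z2Nat.id by exact Hz. lra.
Qed.

Lemma nat_floor_sample_lt (n : nat) (t : R) :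
  (0 < n)%nat -> 0 <= t < 1 -> (nat_floor (t * INR n) < n)%nat.
Proof.
  intros Hn Ht. apply lt_0_INR in Hn.
  destruct (nat_floor_spec (t * INR n)) as [Hle _]; [nra |].
  apply INR_lt. nra.
Qed.

Lemma cycle_dist_floor_close (n : nat) (t t' : R) :
  (0 < n)%nat -> 0 <= t < 1 -> 0 <= t' < 1 ->
  Rabs (cycle_dist n (nat_floor (t * INR n)) (nat_floor (t' * INR n))
        - INR n * circle1_dist t t') <= 1.
Proof.
  intros Hn Ht Ht'. apply lt_0_INR in Hn.
  destruct (nat_floor_spec (t * INR n)); [nra |].
  destruct (nat_floor_spec (t' * INR n)); [nra |].
  set (a := nat_floor (t * INR n)) in *. set (b := nat_floor (t' * INR n)) in *.
  change (cycle_dist n a b) with (circle_gap (INR n) (INR a - INR b)).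
  change (circle1_dist t t') with (circle_gap 1 (t - t')).
  rewrite <- circle_gap_scale by lra. rewrite Rmult_1_r.
  eapply Rle_trans; [apply circle_gap_lipschitz |].
  apply Rabs_le. nra.
Qed.

Lemma rel_close_bilip (K D q : R) :
  1 < K -> 0 <= D -> Rabs (q - D) <= (1 - / K) * D -> D / K <= q <= K * D.
Proof.
  intros HK HD Hq. apply Rabs_le_inv in Hq.
  assert (HKinv : K * / K = 1) by (field; lra).
  assert (0 < / K) by (apply Rinv_0_lt_compat; lra).
  unfold Rdiv. split; nra.
Qed.

Lemma close_of_bilip (lam K c r : R) :
  0 < lam -> 1 <= K -> 0 <= c -> lam * c / K <= r <= K * (lam * c) ->
  Rabs (r / lam - c) <= (K - 1) * c.
Proof.
  intros Hlam HK Hc [Hlo Hhi].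
  assert (HKinv : K * / K = 1) by (field; lra).
  assert (0 < / K) by (apply Rinv_0_lt_compat; lra).
  assert (Hr : r = lam * (r / lam)) by (field; lra).
  set (x := r / lam) in *.
  assert (Hx1 : c * / K <= x).
  { apply Rmult_le_reg_l with lam; [lra |]. unfold Rdiv in Hlo. nra. }
  assert (Hx2 : x <= K * c) by (apply Rmult_le_reg_l with lam; nra).
  apply Rabs_le. split; nra.
Qed.

Lemma bilip_of_close_samples (X : Type) (d : X -> X -> R) (K sc : R) (n : nat)
  (x : nat -> X) :
  (forall p, d p p = 0) -> 1 < K -> 0 < sc -> (0 < n)%nat ->
  (forall i j, (i < n)%nat -> (j < n)%nat ->
     Rabs (d (x i) (x j) / sc - cycle_dist n i j / INR n) < (1 - / K) / INR n) ->
  bilip_ngon d K (sc / INR n) n x.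
Proof.
  intros Hd0 HK Hsc Hn Hclose i j Hi Hj. apply lt_0_INR in Hn.
  assert (HKinv : / K < 1) by (rewrite <- Rinv_1; apply Rinv_lt_contravar; lra).
  destruct (cycle_index_gap n i j Hi Hj) as [Hmax Hmin].
  set (D := cycle_dist n i j / INR n).
  assert (HD : 0 <= D).
  { unfold D, Rdiv. apply Rmult_le_pos; [apply (cycle_dist_bounds n i j Hi Hj) |].
    left. apply Rinv_0_lt_compat. lra. }
  assert (Hrel : Rabs (d (x i) (x j) / sc - D) <= (1 - / K) * D).
  { destruct (Nat.eq_dec i j) as [<- | Hij].
    - unfold D, cycle_dist. rewrite Hd0, Rminus_diag, Rabs_R0, Rmin_left by lra.
      unfold Rdiv. rewrite !Rmult_0_l, Rminus_diag, Rabs_R0. lra.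
    - assert (Hc : 1 <= cycle_dist n i j).
      { apply circle_gap_bounds. specialize (Hmin Hij). lra. }
      apply Rlt_le, Rlt_le_trans with (1 := Hclose i j Hi Hj).
      unfold D, Rdiv. apply Rmult_le_compat_l; [lra |].
      rewrite <- (Rmult_1_l (/ INR n)) at 1.
      apply Rmult_le_compat_r; [left; apply Rinv_0_lt_compat |]; lra. }
  destruct (rel_close_bilip K D _ HK HD Hrel) as [Hlo Hhi].
  replace (d (x i) (x j)) with (sc * (d (x i) (x j) / sc)) by (field; lra).
  replace (sc / INR n * cycle_dist n i j) with (sc * D) by (unfold D; field; lra).
  unfold Rdiv in *. split; nra.
Qed.

Lemma cone_circle_samples_close (X : Type) (d : X -> X -> R) (U : (nat -> Prop) -> Prop)
  (s : nat -> R) (f : R -> nat -> X) (n : nat) (eps : R) :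
  is_ultrafilter U ->
  (forall t t', 0 <= t < 1 -> 0 <= t' < 1 ->
     cone_dist_is d U s (f t) (f t') (circle1_dist t t')) ->
  (0 < n)%nat -> 0 < eps ->
  U (fun m => forall i, (i < n)%nat -> forall j, (j < n)%nat ->
       Rabs (d (f (INR i / INR n) m) (f (INR j / INR n) m) / s m
             - cycle_dist n i j / INR n) < eps).
Proof.
  intros HU Hf Hn Heps.
  assert (Hvertex : forall i, (i < n)%nat -> 0 <= INR i / INR n < 1).
  { intros i Hi. apply lt_INR in Hi. pose proof (pos_INR i).
    split.
    - apply Rmult_le_pos; [lra | left; apply Rinv_0_lt_compat; lra].
    - apply Rmult_lt_reg_r with (INR n); [lra |]. field_simplify; lra. }
  apply ultrafilter_forall_lt; [exact HU |]. intros i Hi.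
  apply ultrafilter_forall_lt; [exact HU |]. intros j Hj.
  rewrite cycle_dist_scaled_circle by exact Hn.
  replace (INR n * _ / INR n) with (circle1_dist (INR i / INR n) (INR j / INR n))
    by (apply lt_0_INR in Hn; field; lra).
  exact (Hf _ _ (Hvertex i Hi) (Hvertex j Hj) eps Heps).
Qed.

Lemma approximates_ngons_of_cone_circle (X : Type) (d : X -> X -> R)
  (U : (nat -> Prop) -> Prop) (b : nat -> X) (s : nat -> R) :
  (forall p, d p p = 0) -> nonprincipal_ultrafilter U -> scaling_seq s ->
  cone_contains_unit_circle d U b s -> approximates_ngons d.
Proof.
  intros Hd0 HU Hs [f [_ Hf]] K HK n Lam.
  pose proof (Rle_abs Lam).
  destruct n as [| n'].
  { exists (Rabs Lam + 1). repeat split; [lra | pose proof (Rabs_pos Lam); lra |].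
    exists b. intros i j Hi. lia. }
  set (n := S n'). assert (Hn : 0 < INR n) by (apply lt_0_INR; lia).
  assert (Heps : 0 < (1 - / K) / INR n).
  { apply Rdiv_lt_0_compat; [| exact Hn].
    assert (/ K < 1) by (rewrite <- Rinv_1; apply Rinv_lt_contravar; lra). lra. }
  destruct (ultrafilter_exists_large U s _ (INR n * (Rabs Lam + 1)) HU Hs
              (cone_circle_samples_close X d U s f n _ (proj1 HU) Hf ltac:(lia) Heps))
    as [m [Hclose Hsm]].
  assert (Hlam : Rabs Lam + 1 < s m / INR n).
  { apply Rmult_lt_reg_r with (INR n); [exact Hn |]. field_simplify; lra. }
  exists (s m / INR n). repeat split; [lra | pose proof (Rabs_pos Lam); lra |].
  exists (fun i => f (INR i / INR n) m).
  apply bilip_of_close_samples; try assumption; [apply (proj1 Hs) | lia |].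
  intros i j Hi Hj. exact (Hclose i Hi j Hj).
Qed.

Lemma approximates_ngons_seq (X : Type) (d : X -> X -> R) :
  approximates_ngons d ->
  exists (lam : nat -> R) (g : nat -> nat -> X), forall m,
    INR m < lam m /\ bilip_ngon d (1 + / INR (S m)) (lam m) (S m) (g m).
Proof.
  intros Happ.
  assert (Hm : forall m, exists p : R * (nat -> X),
             INR m < fst p /\ bilip_ngon d (1 + / INR (S m)) (fst p) (S m) (snd p)).
  { intros m.
    assert (0 < / INR (S m)) by (apply Rinv_0_lt_compat, lt_0_INR; lia).
    destruct (Happ (1 + / INR (S m)) ltac:(lra) (S m) (INR m)) as (l & Hl & _ & g & Hg).
    now exists (l, g). }
  destruct (choice _ Hm) as [F HF].
  exists (fun m => fst (F m)), (fun m => snd (F m)). exact HF.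
Qed.

Lemma ngon_sample_dist_close (X : Type) (d : X -> X -> R) (lam : R) (n : nat)
  (g : nat -> X) (t t' : R) :
  (0 < n)%nat -> 0 < lam -> bilip_ngon d (1 + / INR n) lam n g ->
  0 <= t < 1 -> 0 <= t' < 1 ->
  Rabs (d (g (nat_floor (t * INR n))) (g (nat_floor (t' * INR n))) / (lam * INR n)
        - circle1_dist t t') <= 2 / INR n.
Proof.
  intros Hn Hlam Hg Ht Ht'.
  pose proof (nat_floor_sample_lt n t Hn Ht) as Hi.
  pose proof (nat_floor_sample_lt n t' Hn Ht') as Hj.
  pose proof (cycle_dist_floor_close n t t' Hn Ht Ht') as Hfloor.
  pose proof (cycle_dist_bounds n _ _ Hi Hj) as Hc.
  apply lt_0_INR in Hn.
  assert (Hinv : 0 < / INR n) by (apply Rinv_0_lt_compat; lra).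
  set (c := cycle_dist n (nat_floor (t * INR n)) (nat_floor (t' * INR n))) in *.
  set (r := d (g (nat_floor (t * INR n))) (g (nat_floor (t' * INR n)))).
  assert (Hrc : Rabs (r / lam - c) <= 1).
  { eapply Rle_trans.
    { apply close_of_bilip with (K := 1 + / INR n); [lra | lra | lra | exact (Hg _ _ Hi Hj)]. }
    replace (1 + / INR n - 1) with (/ INR n) by ring.
    apply Rmult_le_reg_l with (INR n); [lra |]. field_simplify; lra. }
  apply Rabs_le_inv in Hrc. apply Rabs_le_inv in Hfloor.
  replace (r / (lam * INR n) - circle1_dist t t')
    with ((r / lam - INR n * circle1_dist t t') / INR n) by (field; lra).
  unfold Rdiv. rewrite Rabs_mult, (Rabs_pos_eq (/ INR n)) by lra.
  apply Rmult_le_compat_r; [lra |]. apply Rabs_le. lra.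
Qed.

Lemma cone_circle_of_approximates_ngons (X : Type) (d : X -> X -> R)
  (U : (nat -> Prop) -> Prop) :
  nonprincipal_ultrafilter U -> approximates_ngons d ->
  exists b s, scaling_seq s /\ cone_contains_unit_circle d U b s.
Proof.
  intros HU Happ. destruct (approximates_ngons_seq X d Happ) as (lam & g & Hg).
  assert (Hlam : forall m, 0 < lam m).
  { intros m. pose proof (pos_INR m). pose proof (proj1 (Hg m)). lra. }
  set (s := fun m => lam m * INR (S m)).
  set (F := fun t m => g m (nat_floor (t * INR (S m)))).
  assert (Hclose : forall t t', 0 <= t < 1 -> 0 <= t' < 1 -> forall m,
             Rabs (d (F t m) (F t' m) / s m - circle1_dist t t') <= 2 / INR (S m)).
  { intros t t' Ht Ht' m.
    apply ngon_sample_dist_close; [lia | apply Hlam | apply (Hg m) | exact Ht | exact Ht']. }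
  assert (Hs_ge : forall m, lam m <= s m).
  { intros m. unfold s. rewrite S_INR. pose proof (pos_INR m). pose proof (Hlam m). nra. }
  exists (F 0), s. split; [split |].
  - intros m. pose proof (Hs_ge m). pose proof (Hlam m). lra.
  - intros M. destruct (INR_archimed 1 M) as [N HN]; [lra |].
    exists N. intros m Hm. apply le_INR in Hm.
    pose proof (Hs_ge m). pose proof (proj1 (Hg m)). lra.
  - exists F. split.
    + intros t Ht. exists 3. intros m.
      assert (H0 : 0 <= 0 < 1) by lra.
      pose proof (Rabs_le_inv _ _ (Hclose t 0 Ht H0 m)).
      pose proof (circle_gap_le 1 (t - 0)).
      assert (2 / INR (S m) <= 2).
      { rewrite S_INR. pose proof (pos_INR m).
        apply Rmult_le_reg_r with (INR m + 1); [lra |]. field_simplify; lra. }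
      change (circle1_dist t 0) with (circle_gap 1 (t - 0)) in *. lra.
    + intros t t' Ht Ht'. apply ultralim_of_Un_cv; [exact HU |].
      apply Un_cv_of_bound with 2. exact (Hclose t t' Ht Ht').
Qed.

Theorem corollary3p8 (X : Type) (d : X -> X -> R) (hd : is_metric d) :
  (~ exists (U : (nat -> Prop) -> Prop) (b : nat -> X) (s : nat -> R),
       nonprincipal_ultrafilter U /\ scaling_seq s /\
       cone_contains_unit_circle d U b s)
  <-> ~ approximates_ngons d.
Proof.
  assert (Hd0 : forall p, d p p = 0) by (intros p; apply hd; reflexivity).
  split.
  - intros Hno Happ. apply Hno.
    destruct exists_nonprincipal_ultrafilter as [U HU].
    destruct (cone_circle_of_approximates_ngons X d U HU Happ) as (b & s & Hs & Hcirc).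
    exists U, b, s. auto.
  - intros Hno (U & b & s & HU & Hs & Hcirc). apply Hno.
    exact (approximates_ngons_of_cone_circle X d U b s Hd0 HU Hs Hcirc).
Qed.
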